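(* Let $N$ be a set of $n$ agents and $O$ a set of $n$ objects, each agent $i$ having a strict linear order $\succ_i$ over $O$ and each object $o$ a strict linear order $\succ_o$ over $N$. If a random matching $p$ is claimwise weakly stable, then it is weakly sd-stable.
   Context: A random matching is an $n\times n$ bistochastic matrix $p=[p(i,o)]$; it is deterministic if entries are in $\{0,1\}$. $p$ is claimwise weakly stable if for each $(i,o)\in N\times O$ and each $j\in N$ with $i\succ_o j$, $\sum_{o':o'\succ_i o}p(i,o')\ge p(j,o)$ (with strict preferences this coincides with claimwise stability). For agent $i$ with $o_1\succ_i\dots\succ_i o_n$, $p(i)\succsim_i^{sd}q(i)$ if $\sum_{l=1}^k p(i,o_l)\ge\sum_{l=1}^k q(i,o_l)$ for all $k$, and $p(i)\succ_i^{sd}q(i)$ if additionally $p(i)\neq q(i)$; for object $o$ with $i_1\succ_o\dots\succ_o i_n$, $p(o)\succsim_o^{sd}q(o)$ if $\sum_{l=1}^k p(i_l,o)\ge\sum_{l=1}^k q(i_l,o)$ for all $k$, and $p(o)\succ_o^{sd}q(o)$ if additionally $p(o)\ne q(o)$. $p$ is strongly sd-blocked by $(i,o)$ if there is a deterministic matching $q\ne p$ with $q(i,o)=1$, $q(i)\succ_i^{sd}p(i)$ and $q(o)\succ_o^{sd}p(o)$. $p$ is weakly sd-stable if no pair $(i,o)$ strongly sd-blocks $p$. *)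

From HB Require Import structures.
From mathcomp Require Import all_boot all_order all_fingroup all_algebra.
Set Implicit Arguments. Unset Strict Implicit. Unset Printing Implicit Defensive.
Import Order.TTheory GRing.Theory Num.Theory.
Local Open Scope ring_scope.

(* Agents N = 'I_n, objects O = 'I_n.  A strict linear order over a finite set
   of n elements is given by its ranking: a permutation s with s l = the
   (l+1)-th most preferred element. *)

Definition prefers (n : nat) (s : {perm 'I_n}) (a b : 'I_n) : bool :=
  (s^-1%g a < s^-1%g b)%N.

(* p(i,o) = p i o : rows are agents, columns objects *)
Definition bistochastic (R : realFieldType) (n : nat) (p : 'M[R]_n) : Prop :=
  [/\ forall i o, 0 <= p i o,
      forall i, \sum_(o < n) p i o = 1
    & forall o, \sum_(i < n) p i o = 1].

Definition deterministic (R : realFieldType) (n : nat) (p : 'M[R]_n) : Prop :=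
  forall i o, p i o = 0 \/ p i o = 1.

Definition claimwise_weakly_stable (R : realFieldType) (n : nat)
  (prefA prefO : 'I_n -> {perm 'I_n}) (p : 'M[R]_n) : Prop :=
  forall (i o j : 'I_n), prefers (prefO o) i j ->
    p j o <= \sum_(o' < n | prefers (prefA i) o' o) p i o'.

Definition sd_agent_ge (R : realFieldType) (n : nat)
  (prefA : 'I_n -> {perm 'I_n}) (i : 'I_n) (p q : 'M[R]_n) : Prop :=
  forall k : nat, \sum_(l < n | (l < k)%N) q i (prefA i l)
                  <= \sum_(l < n | (l < k)%N) p i (prefA i l).

Definition sd_agent_gt (R : realFieldType) (n : nat)
  (prefA : 'I_n -> {perm 'I_n}) (i : 'I_n) (p q : 'M[R]_n) : Prop :=
  sd_agent_ge prefA i p q /\ exists o, p i o <> q i o.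

Definition sd_object_ge (R : realFieldType) (n : nat)
  (prefO : 'I_n -> {perm 'I_n}) (o : 'I_n) (p q : 'M[R]_n) : Prop :=
  forall k : nat, \sum_(l < n | (l < k)%N) q (prefO o l) o
                  <= \sum_(l < n | (l < k)%N) p (prefO o l) o.

Definition sd_object_gt (R : realFieldType) (n : nat)
  (prefO : 'I_n -> {perm 'I_n}) (o : 'I_n) (p q : 'M[R]_n) : Prop :=
  sd_object_ge prefO o p q /\ exists i, p i o <> q i o.

Definition strongly_sd_blocks (R : realFieldType) (n : nat)
  (prefA prefO : 'I_n -> {perm 'I_n}) (p : 'M[R]_n) (i o : 'I_n) : Prop :=
  exists q : 'M[R]_n,
    [/\ bistochastic q, deterministic q, q <> p & q i o = 1] /\
    sd_agent_gt prefA i q p /\ sd_object_gt prefO o q p.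

Definition weakly_sd_stable (R : realFieldType) (n : nat)
  (prefA prefO : 'I_n -> {perm 'I_n}) (p : 'M[R]_n) : Prop :=
  forall i o, ~ strongly_sd_blocks prefA prefO p i o.

From mathcomp Require Import all_boot all_order all_fingroup all_algebra.
Set Implicit Arguments.
Unset Strict Implicit.
Unset Printing Implicit Defensive.
Import Order.TTheory GRing.Theory Num.Theory.
Local Open Scope ring_scope.

(* Since q i o = 1, the sd-dominance of q over p
   for agent i (resp. object o), read at the rank of o (resp. i), says that p
   gives i no probability of any object i prefers to o (resp. gives o no
   probability of any agent o prefers to i).  Claimwise stability then bounds
   p j o for every agent j that o ranks below i by that zero mass, so column o
   of p is concentrated on i, hence p i o = 1 and row i of p equals row i of
   q, contradicting the strictness of i's sd-improvement. *)

Section Preferences.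

Variable n : nat.
Implicit Types (s : {perm 'I_n}) (a b : 'I_n).

Lemma prefers_irrefl s a : ~~ prefers s a a.
Proof. by rewrite /prefers ltnn. Qed.

Lemma prefers_total s a b : a != b -> prefers s a b || prefers s b a.
Proof. by rewrite /prefers -neq_ltn val_eqE (inj_eq (@perm_inj _ _)). Qed.

Lemma sum_rank_prefix (R : realFieldType) s (F : 'I_n -> R) a :
  \sum_(l < n | (l < s^-1%g a)%N) F (s l) = \sum_(b < n | prefers s b a) F b.
Proof.
rewrite (reindex_inj (h := (s^-1)%g) (@perm_inj _ _)) /=.
by apply: eq_bigr => b _; rewrite permKV.
Qed.

End Preferences.

Section Lotteries.

Variables (R : realFieldType) (n : nat).
Implicit Types (F G : 'I_n -> R) (s : {perm 'I_n}) (a b : 'I_n).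

Lemma lottery_sure_eventP F a :
  (forall b, 0 <= F b) -> \sum_b F b = 1 ->
  F a = 1 <-> forall b, b != a -> F b = 0.
Proof.
move=> F_ge0; rewrite (bigD1 a) //= => sumF; split=> [Fa1 | Fb0].
- move: sumF; rewrite Fa1 => /(canRL (addKr 1)); rewrite addNr.
  by move/psumr_eq0P => Fb0 b; apply: Fb0 => b' _; apply: F_ge0.
- by rewrite big1 ?addr0 // in sumF.
Qed.

Lemma sd_dominated_by_sure s F G a :
  (forall b, 0 <= G b) -> (forall b, b != a -> F b = 0) ->
  (forall k : nat, \sum_(l < n | (l < k)%N) G (s l)
                   <= \sum_(l < n | (l < k)%N) F (s l)) ->
  forall b, prefers s b a -> G b = 0.
Proof.
move=> G_ge0 Fb0 /(_ (s^-1%g a)); rewrite !sum_rank_prefix.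
have -> : \sum_(b < n | prefers s b a) F b = 0.
  apply: big1 => b ba; apply: Fb0.
  by apply: contraTneq ba => ->; apply: prefers_irrefl.
move=> G_le0; apply/psumr_eq0P => [b _ | ]; first exact: G_ge0.
by apply/le_anti; rewrite G_le0 sumr_ge0.
Qed.

End Lotteries.

Theorem proposition33 (R : realFieldType) (n : nat)
  (prefA prefO : 'I_n -> {perm 'I_n}) (p : 'M[R]_n) :
  bistochastic p ->
  claimwise_weakly_stable prefA prefO p ->
  weakly_sd_stable prefA prefO p.
Proof.
move=> [p_ge0 p_row p_col] cws i o
  [q [[[q_ge0 q_row q_col] _ _ qio] [[sdA [o1 pq_neq]] [sdO _]]]].
have q_rowi := (lottery_sure_eventP o (q_ge0 i) (q_row i)).1 qio.
have q_colo := (lottery_sure_eventP i (q_ge0^~ o) (q_col o)).1 qio.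
have p_rowi_above := sd_dominated_by_sure (p_ge0 i) q_rowi sdA.
have p_colo_above := sd_dominated_by_sure (p_ge0^~ o) q_colo sdO.
have p_colo : forall j, j != i -> p j o = 0.
  move=> j /(prefers_total (prefO o)) /orP[ji | ij]; first exact: p_colo_above.
  apply/le_anti; rewrite p_ge0 andbT (le_trans (cws i o j ij)) //.
  by rewrite big1.
have p_io := (lottery_sure_eventP i (p_ge0^~ o) (p_col o)).2 p_colo.
have p_rowi := (lottery_sure_eventP o (p_ge0 i) (p_row i)).1 p_io.
apply: pq_neq; have [-> | o1o] := eqVneq o1 o; first by rewrite qio p_io.
by rewrite q_rowi // p_rowi.
Qed.
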